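(* Let $G$ be a 2-ichromatic ordered graph with vertices $v_1<\dots<v_{m+n}$ such that $\{v_1,\ldots,v_m\}$ and $\{v_{m+1},\ldots,v_{m+n}\}$ are the parts of an interval 2-coloring of $G$ (i.e., both are independent sets). If $v_1v_{m+1}$, $v_mv_{m+n}$ and $v_mv_{m+1}$ are edges of $G$, then $R(G)\ge 5r+1$, where $r=\min(m,n)-1$.
   Context: An ordered graph is a graph together with a specified linear ordering of its vertex set. An ordered graph $G$ is contained in an ordered graph $H$ if there is an order-preserving injection $V(G)\to V(H)$ mapping edges to edges. An interval coloring of an ordered graph is a partition of its vertex set into independent sets each consisting of consecutive vertices (called parts); an ordered graph is 2-ichromatic if its minimum number of parts in an interval coloring is 2. $R(G)$ denotes the 2-color ordered Ramsey number: the minimum $N$ such that every 2-coloring of the edges of the ordered complete graph on $N$ vertices contains a monochromatic copy of $G$. *)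

From mathcomp Require Import all_boot.
Set Implicit Arguments. Unset Strict Implicit. Unset Printing Implicit Defensive.

(* An ordered graph on V vertices is represented by its vertex count V
   (vertices 0 < 1 < ... < V-1, ordered as naturals) and a relation
   e : rel nat; the edge set is {{i,j} : i < j < V, e i j}, i.e. only
   e i j with i < j is consulted. *)
Definition is_edge (V : nat) (e : rel nat) (i j : nat) : bool :=
  [&& i < j, j < V & e i j].

(* Interval colouring with at most k parts: a nondecreasing class map into
   {0..k-1} such that each class is an independent set (classes of a
   nondecreasing map are intervals). *)
Definition interval_colorable (V : nat) (e : rel nat) (k : nat) : Prop :=
  exists c : nat -> nat,
    [/\ forall i, i < V -> c i < k,
        forall i j, i <= j -> j < V -> c i <= c j
      & forall i j, is_edge V e i j -> c i != c j].

Definition two_ichromatic (V : nat) (e : rel nat) : Prop :=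
  interval_colorable V e 2 /\ ~ interval_colorable V e 1.

(* A red/blue colouring of the ordered complete graph K_N is any
   col : nat -> nat -> bool, the colour of edge {i,j} with i < j < N
   being col i j.  (V, e) has a monochromatic copy of colour b in col if
   there is an order-preserving injection f : [0,V) -> [0,N) sending
   every edge of (V,e) to an edge of colour b. *)
Definition mono_copy (V : nat) (e : rel nat) (N : nat)
  (col : nat -> nat -> bool) : Prop :=
  exists (b : bool) (f : nat -> nat),
    [/\ forall i, i < V -> f i < N,
        forall i j, i < j -> j < V -> f i < f j
      & forall i j, is_edge V e i j -> col (f i) (f j) = b].

(* N has the Ramsey property for (V,e): every 2-colouring of K_N contains a
   monochromatic copy.  R(G) is the least such N. *)
Definition ramsey_prop (V : nat) (e : rel nat) (N : nat) : Prop :=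
  forall col : nat -> nat -> bool, mono_copy V e N col.

From mathcomp Require Import all_boot.
From mathcomp Require Import zify.

(* Write r for min(m,n) - 1 and x < y < z < w for the images of v_1, v_m,
   v_(m+1), v_(m+n) in a copy of G.  Since v_1..v_m and v_(m+1)..v_(m+n) each
   consist of at least r+1 vertices, y - x >= r and w - z >= r.  Cut K_(5r)
   into five consecutive intervals of length r and colour an edge by the
   intervals (a, c) of its endpoints through a fixed pattern on {0,..,4}.
   The blocks a <= b <= c <= d of x, y, z, w then satisfy a < b <= c < d, and
   a check of the finitely many such quadruples shows that the edges xz, yw,
   yz are never monochromatic, so K_(5r) has no monochromatic copy of G. *)

Definition block_colour (a c : nat) : bool :=
  (a, c) \in [:: (1, 1); (1, 3); (1, 4); (2, 2); (2, 4); (3, 4)].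

Lemma block_colour_not_mono a b c d :
  a < b -> b <= c -> c < d -> d < 5 ->
  block_colour a c = block_colour b d -> block_colour b d = block_colour b c ->
  False.
Proof.
move=> ab bc cd d5.
destruct d as [|[|[|[|[|d]]]]]; try lia;
destruct c as [|[|[|[|[|c]]]]]; try lia;
destruct b as [|[|[|[|[|b]]]]]; try lia;
destruct a as [|[|[|[|[|a]]]]]; try lia; by [].
Qed.

Definition blowup_colour (r i j : nat) : bool :=
  block_colour (i %/ r) (j %/ r).

Lemma ltn_div2r_gap r x y : 0 < r -> x + r <= y -> x %/ r < y %/ r.
Proof.
move=> r_gt0 xy; apply: leq_trans (leq_div2r r xy).
by rewrite -{2}[r]mul1n divnDMl // addn1.
Qed.

Lemma blowup_colour_not_mono r x y z w :
  0 < r -> x + r <= y -> y < z -> z + r <= w -> w < 5 * r ->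
  blowup_colour r x z = blowup_colour r y w ->
  blowup_colour r y w = blowup_colour r y z -> False.
Proof.
move=> r_gt0 xy yz zw w_lt; apply: block_colour_not_mono.
- exact: ltn_div2r_gap.
- exact/leq_div2r/ltnW.
- exact: ltn_div2r_gap.
- by rewrite ltn_divLR // mulnC.
Qed.

Lemma homo_ltn_addn_le V (f : nat -> nat) :
  (forall i j, i < j -> j < V -> f i < f j) ->
  forall i k, i + k < V -> f i + k <= f (i + k).
Proof.
move=> f_incr i; elim=> [|k IHk] ik_lt; first by rewrite !addn0.
have := f_incr (i + k) (i + k.+1); have := IHk; lia.
Qed.

Theorem corollary3p3 (m n : nat) (e : rel nat) :
  0 < m -> 0 < n ->
  two_ichromatic (m + n) e ->
  (forall i j, i < j -> j < m -> ~~ e i j) ->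
  (forall i j, m <= i -> i < j -> j < m + n -> ~~ e i j) ->
  e 0 m ->
  e m.-1 (m + n).-1 ->
  e m.-1 m ->
  forall N, ramsey_prop (m + n) e N -> 5 * (minn m n).-1 + 1 <= N.
Proof.
move=> m_gt0 n_gt0 _ _ _ e_first e_span e_mid N ramseyN.
set r := (minn m n).-1.
have [r0 | r_gt0] := posnP r.
  have [_ [f [f_lt _ _]]] := ramseyN (fun _ _ => true).
  by rewrite r0 addn1; apply: leq_ltn_trans (f_lt 0 _); rewrite ?addn_gt0 ?m_gt0.
rewrite addn1 ltnNge; apply/negP => N_le.
have [b [f [f_lt f_incr f_edge]]] := ramseyN (blowup_colour r).
have edge_mono i j : i < j -> j < m + n -> e i j -> blowup_colour r (f i) (f j) = b.
  by move=> ij jV eij; apply: f_edge; rewrite /is_edge ij jV eij.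
have gap := @homo_ltn_addn_le _ _ f_incr.
apply: (@blowup_colour_not_mono r (f 0) (f m.-1) (f m) (f (m + n).-1)) => //.
- by have := gap 0 m.-1; rewrite add0n /r; lia.
- by apply: f_incr; lia.
- have -> : (m + n).-1 = m + n.-1 by lia.
  by have := gap m n.-1; rewrite /r; lia.
- by apply: leq_trans N_le; apply: f_lt; lia.
- by rewrite !edge_mono //; lia.
- by rewrite !edge_mono //; lia.
Qed.
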